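(* For every rational constant $0<c\le1$ and every $\varepsilon>0$ there is an instance of Maximum Coverage with $k=cn$ for which the ratio between the optimal integral value and the optimal value of the LP $$\max\Bigl\{\sum_{e\in E}w_ex_e : x_e\le\min\Bigl\{1,\sum_{i:e\in S_i}y_i\Bigr\}\ \forall e\in E,\ \sum_{i=1}^n y_i\le cn,\ y_i\ge0\ \forall i\in[n]\Bigr\}$$ is at most $(1+\varepsilon)\rho(c)$.
   Context: Maximum Coverage (MC): given a finite set of elements $E$ with weights $w\colon E\to\mathbb{R}_{\ge0}$, sets $S_1,\dots,S_n\subseteq E$ and an integer $k$, find $X\subseteq[n]$ with $|X|\le k$ maximizing $\sum_{e\in\bigcup_{i\in X}S_i}w_e$. Definition of $\rho(c)$: for $\alpha\in[0,1]$ and integer $m\ge1$ let $\sigma(\alpha,m)=\bigl(1-\alpha c-(1-\alpha)/m\bigr)^m$. If $c=1/s$ for some integer $s\ge1$, then $\rho(c)=1-(1-c)^{1/c}$. Otherwise $1/(s+1)<c<1/s$ for a unique integer $s\ge1$, there is a unique $\alpha^*\in(0,1)$ with $\sigma(\alpha^*,s)=\sigma(\alpha^*,s+1)$, and $\rho(c)=1-\sigma(\alpha^*,s)$. *)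

From HB Require Import structures.
From mathcomp Require Import all_boot all_order all_algebra.
From mathcomp Require Import boolp classical_sets reals.
Set Implicit Arguments. Unset Strict Implicit. Unset Printing Implicit Defensive.
Import Order.TTheory GRing.Theory Num.Theory.
Local Open Scope ring_scope.

Section Defs.
Variable R : realType.

Definition mc_sigma (c a : R) (m : nat) : R :=
  (1 - a * c - (1 - a) / m%:R) ^+ m.

Definition mc_s (c : R) : nat := Num.truncn (c^-1).

(* alpha^* : the (paper: unique) alpha in (0,1) with sigma(alpha,s) = sigma(alpha,s+1) *)
Definition alpha_star (c : R) : R :=
  xget 0 [set a : R | 0 < a < 1 /\ mc_sigma c a (mc_s c) = mc_sigma c a (mc_s c).+1].

(* rho(c); in the case c = 1/s, (1-c)^(1/c) = (1-c)^s *)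
Definition rho (c : R) : R :=
  if c == ((mc_s c)%:R)^-1 then 1 - (1 - c) ^+ (mc_s c)
  else 1 - mc_sigma c (alpha_star c) (mc_s c).

Definition cov_value (E : finType) (w : E -> R) (n : nat) (S : 'I_n -> {set E})
    (X : {set 'I_n}) : R :=
  \sum_(e : E | [exists i in X, e \in S i]) w e.

Definition mc_opt (E : finType) (w : E -> R) (n : nat) (S : 'I_n -> {set E})
    (k : nat) : R :=
  \big[Num.max/0]_(X : {set 'I_n} | (#|X| <= k)%N) cov_value w S X.

Definition lp_feasible (E : finType) (n : nat) (S : 'I_n -> {set E}) (b : R)
    (x : E -> R) (y : 'I_n -> R) : Prop :=
  (forall e, x e <= Num.min 1 (\sum_(i | e \in S i) y i)) /\
  \sum_i y i <= b /\ (forall i, 0 <= y i).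

Definition lp_obj (E : finType) (w : E -> R) (x : E -> R) : R :=
  \sum_(e : E) w e * x e.

Definition lp_opt (E : finType) (w : E -> R) (n : nat) (S : 'I_n -> {set E})
    (b : R) : R :=
  sup [set v : R | exists x y, lp_feasible S b x y /\ v = lp_obj w x].

End Defs.

From HB Require Import structures.
From mathcomp Require Import all_boot all_order all_algebra.
From mathcomp Require Import boolp classical_sets reals.
From mathcomp Require Import ring lra zify.
Import Order.TTheory GRing.Theory Num.Theory.
Set Implicit Arguments. Unset Strict Implicit. Unset Printing Implicit Defensive.
Local Open Scope ring_scope.

(* Write c = p/q with s = floor(q/p), so that p = A + B and q = sA + (s+1)B with A > 0.
   The instance has a block of h = sMA sets whose elements are the s-tuples of these
   sets, and a block of l = (s+1)MB sets whose elements are their (s+1)-tuples; the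
   weights lambda and mu of the blocks are spread uniformly.  Putting y = 1/s on the
   first block and 1/(s+1) on the second exhausts the budget cn = M(A+B) and covers
   every tuple of distinct sets, so for large M the LP value tends to lambda + mu.
   Picking a and b sets from the blocks covers lambda(1-u^s) + mu(1-v^(s+1)) with
   u = 1 - a/h and v = 1 - b/l.  For alpha = alpha_star c put
   us = 1 - alpha c - (1 - alpha)/s and vs = 1 - alpha c - (1 - alpha)/(s+1), so that
   us^s = vs^(s+1) = sigma(alpha, s) and (us, vs) spends exactly the budget a + b <= cn.
   With lambda = A vs^s and mu = B us^(s-1) it is a Lagrange point, so by convexity
   the coverage is at most its value there, (lambda + mu)(1 - sigma(alpha, s)), which
   is (lambda + mu) rho(c).  When c = 1/s, B = 0 and only the first block is used. *)

Lemma expr_tangent_le (R : realFieldType) (u v : R) (m : nat) : 0 <= u -> 0 <= v ->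
  v ^+ m + m%:R * v ^+ m.-1 * (u - v) <= u ^+ m.
Proof.
move=> u_ge0 v_ge0; case: m => [|m]; first by rewrite mulr0n !mul0r addr0.
elim: m => [|m IH]; first by rewrite expr0 !expr1; lra.
rewrite !exprSr in IH *; set V := v ^+ m in IH *.
have V_ge0 : 0 <= V by apply: exprn_ge0.
have IHu := ler_wpM2r u_ge0 IH.
have sq_ge0 : 0 <= m.+1%:R * V * (u - v) ^+ 2.
  by rewrite mulr_ge0 ?sqr_ge0 // mulr_ge0 ?ler0n.
rewrite -!natr1 in sq_ge0 IH IHu |- *.
nra.
Qed.

(* [(u0, v0)] minimizes [a x u^m1 + b y v^m2] on the budget half-plane: the first
   hypothesis is the Lagrange condition, and each power lies above its tangent. *)
Lemma weighted_powers_min (R : realFieldType) (m1 m2 : nat) (a b x y u v u0 v0 : R) :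
  0 <= a -> 0 <= b -> 0 <= x -> 0 <= y ->
  0 <= u -> 0 <= v -> 0 <= u0 -> 0 <= v0 ->
  x * u0 ^+ m1.-1 = y * v0 ^+ m2.-1 ->
  m1%:R * a * u0 + m2%:R * b * v0 <= m1%:R * a * u + m2%:R * b * v ->
  a * x * u0 ^+ m1 + b * y * v0 ^+ m2 <= a * x * u ^+ m1 + b * y * v ^+ m2.
Proof.
move=> a_ge0 b_ge0 x_ge0 y_ge0 u_ge0 v_ge0 u0_ge0 v0_ge0 lagrange budget.
have tangent_u := ler_wpM2l (mulr_ge0 a_ge0 x_ge0) (expr_tangent_le m1 u_ge0 u0_ge0).
have tangent_v := ler_wpM2l (mulr_ge0 b_ge0 y_ge0) (expr_tangent_le m2 v_ge0 v0_ge0).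
have slope : 0 <= x * u0 ^+ m1.-1 *
    (m1%:R * a * (u - u0) + m2%:R * b * (v - v0)).
  by rewrite mulr_ge0 ?mulr_ge0 ?exprn_ge0 //; lra.
have split_slope : x * u0 ^+ m1.-1 * (m1%:R * a * (u - u0) + m2%:R * b * (v - v0)) =
    a * x * (m1%:R * u0 ^+ m1.-1 * (u - u0)) + b * y * (m2%:R * v0 ^+ m2.-1 * (v - v0)).
  by rewrite mulrDr {2}lagrange; ring.
lra.
Qed.

Lemma ffact_expn_ratio_bounds (R : realFieldType) (h m : nat) : (0 < h)%N ->
  (1 : R) - (m * m)%:R / h%:R <= (h ^_ m)%:R / h%:R ^+ m <= (1 : R).
Proof.
move=> h_gt0; have hR : 0 < h%:R :> R by rewrite ltr0n.
elim: m => [|m /andP[IHlo IHhi]]; first by rewrite ffactn0 expr0 divr1 mul0r subr0 lexx.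
set P := (h ^_ m)%:R / h%:R ^+ m in IHlo IHhi *.
have P_ge0 : 0 <= P by rewrite divr_ge0 ?exprn_ge0 ?ler0n.
have -> : (h ^_ m.+1)%:R / h%:R ^+ m.+1 = P * ((h - m)%:R / h%:R) :> R.
  by rewrite ffactnSr exprSr natrM invfM /P; ring.
set r := (h - m)%:R / h%:R.
have r_ge0 : 0 <= r by rewrite divr_ge0 ?ler0n ?ltW.
have r_le1 : r <= 1 by rewrite ler_pdivrMr // mul1r ler_nat leq_subr.
have r_ge : 1 - m%:R / h%:R <= r.
  have [m_le_h|h_lt_m] := leqP m h.
    by rewrite /r natrB // mulrBl divff ?gt_eqF.
  rewrite /r (eqP (ltnW h_lt_m : (h - m == 0)%N)) mul0r subr_le0.
  by rewrite (ler_pdivlMr _ _ hR) mul1r ler_nat ltnW.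
have m_ge0 : 0 <= m%:R / h%:R :> R by rewrite divr_ge0 ?ler0n ?ltW.
have -> : (m.+1 * m.+1)%:R / h%:R = (m * m)%:R / h%:R + m%:R / h%:R + m.+1%:R / h%:R :> R.
  by rewrite -!mulrDl -!natrD; congr (_%:R / _); lia.
have mS_ge0 : 0 <= m.+1%:R / h%:R :> R by rewrite divr_ge0 ?ler0n ?ltW.
apply/andP; split; last by rewrite -(mulr1 1) ler_pM.
have := ler_wpM2l P_ge0 r_ge; nra.
Qed.

Lemma ffact_expn_ratio_ge (R : realFieldType) (h m N : nat) (eps : R) :
  0 < eps -> (m <= N)%N -> (N * N)%:R * (1 + eps) / eps <= h%:R ->
  (1 + eps)^-1 <= (h ^_ m)%:R / h%:R ^+ m.
Proof.
move=> eps_gt0 m_le N_large.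
have h_large : (m * m)%:R * (1 + eps) / eps <= h%:R.
  apply: le_trans N_large.
  by rewrite ler_pM2r ?invr_gt0 // ler_pM2r ?ler_nat ?leq_mul //; lra.
have [->|m_gt0] := posnP m.
  by rewrite ffactn0 expr0 divr1 invf_le1 //; lra.
have h_gt0 : (0 < h)%N.
  rewrite -(ltr0n R); apply: lt_le_trans h_large.
  by rewrite divr_gt0 ?mulr_gt0 ?ltr0n ?muln_gt0 ?m_gt0 //; lra.
have hR : 0 < h%:R :> R by rewrite ltr0n.
have /andP[lo _] := ffact_expn_ratio_bounds R m h_gt0.
apply: le_trans lo.
have small : (m * m)%:R / h%:R <= eps / (1 + eps) :> R.
  move: h_large; rewrite ler_pdivrMr // => h_large.
  by rewrite ler_pdivrMr // mulrAC ler_pdivlMr; lra.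
have -> : (1 + eps)^-1 = 1 - eps / (1 + eps) by field; lra.
lra.
Qed.

Lemma ler_expn_one_sub_invS (R : realFieldType) (s : nat) : (0 < s)%N ->
  (1 - s%:R^-1) ^+ s <= (1 - s.+1%:R^-1) ^+ s.+1 :> R.
Proof.
case: s => // s _.
have s_gt0 : 0 < s.+1%:R :> R by rewrite ltr0n.
set v : R := 1 - s.+1%:R^-1; set u : R := 1 - s.+2%:R^-1.
have v_ge0 : 0 <= v by rewrite subr_ge0 invf_le1 ?ler1n.
have u_ge0 : 0 <= u by rewrite subr_ge0 invf_le1 ?ler1n // ltr0n.
apply: le_trans (expr_tangent_le s.+2 u_ge0 v_ge0).
have -> : v ^+ s.+2 + s.+2%:R * v ^+ s.+1 * (u - v) = v ^+ s.+1 * (v + s.+2%:R * (u - v)).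
  by rewrite exprSr; ring.
have -> : v + s.+2%:R * (u - v) = 1.
  rewrite /u /v; field; have := ler0n R s.
  by rewrite !lt0r_neq0 //; lra.
by rewrite mulr1.
Qed.

(* [alpha_star] is an [xget] defaulting to 0: when no root lies in (0,1), the root in
   [0,1) given by the intermediate value theorem must be 0 itself. *)
Lemma alpha_star_spec (R : realType) (c : R) : 0 < c < 1 ->
  0 <= alpha_star c < 1 /\
  mc_sigma c (alpha_star c) (mc_s c) = mc_sigma c (alpha_star c) (mc_s c).+1.
Proof.
move=> /andP[c_gt0 c_lt1].
have s_gt0 : (0 < mc_s c)%N by rewrite truncn_gt0 invf_ge1 // ltW.
rewrite /alpha_star; set s := mc_s c.
pose f a := mc_sigma c a s - mc_sigma c a s.+1.
have f1 : f 1 = (1 - c) ^+ s * c.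
  by rewrite /f /mc_sigma subrr !mul0r !subr0 mul1r exprSr; ring.
have [x /andP[x_ge0 x_le1] fx0] : exists2 x, 0 <= x <= 1 & f x = 0.
  pose base (m : nat) : {poly R} := (1 - m%:R^-1)%:P + (m%:R^-1 - c)%:P * 'X.
  have sigmaE m a : (base m ^+ m).[a] = mc_sigma c a m.
    by rewrite !hornerE /mc_sigma; congr (_ ^+ _); ring.
  pose P := base s ^+ s - base s.+1 ^+ s.+1.
  have PE a : P.[a] = f a by rewrite hornerD hornerN !sigmaE.
  have [|x x01 /rootP] := @poly_ivt R P 0 1 ler01; last by rewrite PE; exists x.
  have f1_ge0 : 0 <= f 1 by rewrite f1 mulr_ge0 ?exprn_ge0 ?subr_ge0 ?ltW.
  rewrite !PE f1_ge0 andbT.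
  by rewrite /f /mc_sigma !mul0r !subr0 !mul1r subr_le0 ler_expn_one_sub_invS.
have x_neq1 : x != 1.
  apply/eqP=> x_eq1; move/eqP: fx0; rewrite x_eq1 f1.
  by apply/negP; rewrite mulf_neq0 ?expf_neq0 ?gt_eqF // subr_gt0.
case: xgetP => [a _ [/andP[a_gt0 a_lt1] ->] | no_root]; first by rewrite ltW.
have x_eq0 : x = 0.
  apply: contra_notP (no_root x) => /eqP x_neq0; split.
    by rewrite lt_def x_neq0 x_ge0 lt_def eq_sym x_neq1 x_le1.
  by apply/eqP; rewrite -subr_eq0 -/(f x) fx0.
by move: fx0; rewrite x_eq0 lexx ltr01 => /eqP; rewrite subr_eq0 => /eqP.
Qed.

Lemma card_ffun_hit (m n : nat) (B : {set 'I_n}) :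
  (#|[set f : {ffun 'I_m -> 'I_n} | [exists t, f t \in B]]| + (n - #|B|) ^ m)%N = (n ^ m)%N.
Proof.
have hitC : [set f : {ffun 'I_m -> 'I_n} | [exists t, f t \in B]] =
    ~: [set f in ffun_on (~: B)].
  apply/setP => f; rewrite inE [in RHS]inE [in RHS]inE.
  apply/existsP/negP => [[t ft_in] /ffun_onP /(_ t)|miss].
    by rewrite inE ft_in.
  apply: contra_notP miss => none; apply/ffun_onP => t; rewrite inE.
  by apply/negP => ft_in; apply: none; exists t.
have := cardsC [set f : {ffun 'I_m -> 'I_n} in ffun_on (~: B)].
rewrite -hitC card_ffun !card_ord cardsE card_ffun_on card_ord addnC.
by rewrite -[n in (n - #|B|)%N](card_ord n) -(cardsC B) addKn.
Qed.

Lemma card_le_ord (n : nat) (A : {pred 'I_n}) : (#|A| <= n)%N.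
Proof. by rewrite -[n in (_ <= n)%N]card_ord max_card. Qed.

Lemma sum_ffun_hit (R : numFieldType) (m n : nat) (B : {set 'I_n}) (x : R) :
  \sum_(f : {ffun 'I_m -> 'I_n} | [exists t, f t \in B]) x / n%:R ^+ m =
  x * (1 - (1 - #|B|%:R / n%:R) ^+ m).
Proof.
have B_le := card_le_ord B.
rewrite -big_set sumr_const -[LHS]mulr_natr.
have /(congr1 (fun k => k%:R : R)) := card_ffun_hit m B.
rewrite natrD => /(canRL (addrK _)) ->.
have [n0|n_gt0] := posnP n.
  have B0 : #|B| = 0%N by apply/eqP; rewrite -leqn0 (leq_trans B_le) ?n0.
  by rewrite B0 subn0 subrr mulr0 mul0r subr0 expr1n subrr mulr0.
have nR : n%:R != 0 :> R by rewrite pnatr_eq0 -lt0n.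
have -> : 1 - #|B|%:R / n%:R = (n%:R - #|B|%:R) / n%:R :> R by field.
rewrite !natrX natrB // expr_div_n.
by field; rewrite expf_neq0.
Qed.

Section Optima.
Variables (R : realType) (E : finType) (w : E -> R) (n : nat) (S : 'I_n -> {set E}).

Lemma lp_obj_le_opt b x y : (forall e, 0 <= w e) -> lp_feasible S b x y ->
  lp_obj w x <= lp_opt w S b.
Proof.
move=> w_ge0 feas; apply: sup_upper_bound; last by exists x, y.
split; first by exists (lp_obj w x), x, y.
exists (\sum_e w e) => _ [x' [y' [[x'_le _] ->]]].
apply: ler_sum => e _; rewrite -[leRHS]mulr1 ler_wpM2l //.
by rewrite (le_trans (x'_le e)) // ge_min lexx.
Qed.

Lemma mc_opt_ge0 k : 0 <= mc_opt w S k.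
Proof. exact: bigmax_ge_id. Qed.

Lemma mc_opt_le k V : (forall X : {set 'I_n}, (#|X| <= k)%N -> cov_value w S X <= V) ->
  mc_opt w S k <= V.
Proof.
move=> cov_le; apply: bigmax_le => //.
have := cov_le finset.set0; rewrite cards0 => /(_ isT); apply: le_trans.
by rewrite /cov_value big_pred0 // => e; apply/existsP => -[i]; rewrite inE.
Qed.

End Optima.

Lemma natr_divK_le (R : numFieldType) (a n : nat) : (a <= n)%N ->
  a%:R / n%:R <= 1 :> R /\ a%:R / n%:R * n%:R = a%:R :> R.
Proof.
have [->|n_gt0 a_le_n] := posnP n.
  by rewrite leqn0 => /eqP->; rewrite !mulr0n !mul0r ler01.
have nR : 0 < n%:R :> R by rewrite ltr0n.
by rewrite divfK ?gt_eqF // ler_pdivrMr // mul1r ler_nat.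
Qed.

Section Instance.
Variables (R : realType) (s h l : nat) (lam mu : R).

(* The sets are indexed by 'I_(h + l), split into a first block of h and a second
   block of l.  An element [inl f] is an s-tuple of first-block sets and lies
   exactly in the sets it lists; [inr g] is an (s+1)-tuple of second-block sets. *)
Definition inst_elem : finType := ({ffun 'I_s -> 'I_h} + {ffun 'I_s.+1 -> 'I_l})%type.

Definition inst_weight (e : inst_elem) : R :=
  match e with inl _ => lam / h%:R ^+ s | inr _ => mu / l%:R ^+ s.+1 end.

Definition inst_set (i : 'I_(h + l)) : {set inst_elem} :=
  [set e : inst_elem | match e with
           | inl f => [exists t, lshift l (f t) == i]
           | inr g => [exists t, rshift h (g t) == i] end].

Definition lpart (X : {set 'I_(h + l)}) : {set 'I_h} := [set j | lshift l j \in X].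
Definition rpart (X : {set 'I_(h + l)}) : {set 'I_l} := [set j | rshift h j \in X].

Lemma card_lpart_rpart X : (#|lpart X| + #|rpart X|)%N = #|X|.
Proof.
rewrite -!sum1_card [RHS]big_split_ord /=.
by congr (_ + _)%N; apply: eq_bigl => i; rewrite inE.
Qed.

Lemma cov_value_inst X : cov_value inst_weight inst_set X =
  lam * (1 - (1 - #|lpart X|%:R / h%:R) ^+ s) +
  mu * (1 - (1 - #|rpart X|%:R / l%:R) ^+ s.+1).
Proof.
rewrite /cov_value big_sumType /= -!sum_ffun_hit.
congr (_ + _); apply: eq_bigl => f; apply/existsP/existsP.
- by case=> i /andP[iX]; rewrite inE => /existsP[t /eqP ft]; exists t; rewrite inE ft.
- case=> t; rewrite inE => ft; exists (lshift l (f t)).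
  by rewrite ft inE; apply/existsP; exists t.
- by case=> i /andP[iX]; rewrite inE => /existsP[t /eqP ft]; exists t; rewrite inE ft.
- case=> t; rewrite inE => ft; exists (rshift h (f t)).
  by rewrite ft inE; apply/existsP; exists t.
Qed.

Definition inst_y (i : 'I_(h + l)) : R := if (i < h)%N then s%:R^-1 else s.+1%:R^-1.

Definition inst_x (e : inst_elem) : R :=
  match e with inl f => (injectiveb f)%:R | inr g => (injectiveb g)%:R end.

Lemma sum_inst_y : \sum_i inst_y i = h%:R / s%:R + l%:R / s.+1%:R.
Proof.
rewrite big_split_ord /= (eq_bigr (fun=> s%:R^-1)) => [|j _]; last first.
  by rewrite /inst_y /= ltn_ord.
rewrite [X in _ + X](eq_bigr (fun=> s.+1%:R^-1)) => [|j _]; last first.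
  by rewrite /inst_y /= ltnNge leq_addr.
by rewrite !sumr_const !card_ord !mulr_natl.
Qed.

Lemma inst_y_coverl (f : {ffun 'I_s -> 'I_h}) :
  \sum_(i | inl f \in inst_set i) inst_y i = #|codom f|%:R / s%:R.
Proof.
rewrite big_split_ord /= [X in _ + X]big_pred0 ?addr0 => [|j]; last first.
  by rewrite inE; apply/negbTE/existsPn => t; rewrite eq_lrshift.
rewrite (eq_bigl (mem (codom f))) => [|j]; last first.
  by rewrite inE; apply/existsP/codomP => -[t]; [move/eqP/lshift_inj|move->]; exists t.
rewrite (eq_bigr (fun=> s%:R^-1)) => [|j _]; last by rewrite /inst_y /= ltn_ord.
by rewrite sumr_const mulr_natl.
Qed.

Lemma inst_y_coverr (g : {ffun 'I_s.+1 -> 'I_l}) :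
  \sum_(i | inr g \in inst_set i) inst_y i = #|codom g|%:R / s.+1%:R.
Proof.
rewrite big_split_ord /= [X in X + _]big_pred0 ?add0r => [|j]; last first.
  by rewrite inE; apply/negbTE/existsPn => t; rewrite eq_rlshift.
rewrite (eq_bigl (mem (codom g))) => [|j]; last first.
  by rewrite inE; apply/existsP/codomP => -[t]; [move/eqP/rshift_inj|move->]; exists t.
rewrite (eq_bigr (fun=> s.+1%:R^-1)) => [|j _]; last first.
  by rewrite /inst_y /= ltnNge leq_addr.
by rewrite sumr_const mulr_natl.
Qed.

Lemma inst_lp_feasible b : (0 < s)%N -> h%:R / s%:R + l%:R / s.+1%:R <= b ->
  lp_feasible inst_set b inst_x inst_y.
Proof.
move=> s_gt0 y_budget; have y_ge0 i : 0 <= inst_y i.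
  by rewrite /inst_y; case: ifP; rewrite invr_ge0 ler0n.
split; last by rewrite sum_inst_y.
move=> e; have cover_ge0 : 0 <= \sum_(i | e \in inst_set i) inst_y i by rewrite sumr_ge0.
case: e cover_ge0 => [f|g] /=; case: (boolP (injectiveb _)) => [/injectiveP inj|_] cover_ge0.
- by rewrite inst_y_coverl (card_codom inj) card_ord divff ?pnatr_eq0 -?lt0n // le_min lexx.
- by rewrite le_min ler01 cover_ge0.
- by rewrite inst_y_coverr (card_codom inj) card_ord divff ?pnatr_eq0 // le_min lexx.
- by rewrite le_min ler01 cover_ge0.
Qed.

Lemma inst_lp_obj : lp_obj inst_weight inst_x =
  lam * ((h ^_ s)%:R / h%:R ^+ s) + mu * ((l ^_ s.+1)%:R / l%:R ^+ s.+1).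
Proof.
have inj_mass m n : \sum_(f : {ffun 'I_m -> 'I_n}) (injectiveb f)%:R = (n ^_ m)%:R :> R.
  rewrite -[n in RHS]card_ord -[m in RHS]card_ord -card_inj_ffuns -sum1_card natr_sum.
  by rewrite [RHS]big_mkcond /=; apply: eq_bigr => f _; rewrite inE; case: injectiveb.
rewrite /lp_obj big_sumType /= -!mulr_sumr !inj_mass.
by rewrite !mulrA -!(mulrC (_ ^-1)) !mulrA.
Qed.

Lemma lp_opt_inst_ge b : (0 < s)%N -> 0 <= lam -> 0 <= mu ->
  h%:R / s%:R + l%:R / s.+1%:R <= b ->
  lam * ((h ^_ s)%:R / h%:R ^+ s) + mu * ((l ^_ s.+1)%:R / l%:R ^+ s.+1) <=
  lp_opt inst_weight inst_set b.
Proof.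
move=> s_gt0 lam_ge0 mu_ge0 y_budget; rewrite -inst_lp_obj.
apply: lp_obj_le_opt (inst_lp_feasible s_gt0 y_budget) => -[] _ /=.
  by rewrite divr_ge0 ?exprn_ge0.
by rewrite divr_ge0 ?exprn_ge0.
Qed.

Lemma mc_opt_inst_le k V :
  (forall u v : R, 0 <= u -> 0 <= v -> (1 - u) * h%:R + (1 - v) * l%:R <= k%:R ->
     lam * (1 - u ^+ s) + mu * (1 - v ^+ s.+1) <= V) ->
  mc_opt inst_weight inst_set k <= V.
Proof.
move=> cov_le; apply: mc_opt_le => X X_le; rewrite cov_value_inst.
have [lpart_le1 lpartK] := natr_divK_le R (card_le_ord (lpart X)).
have [rpart_le1 rpartK] := natr_divK_le R (card_le_ord (rpart X)).
apply: cov_le; rewrite ?subr_ge0 // !subKr lpartK rpartK -natrD ler_nat.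
by rewrite card_lpart_rpart.
Qed.

End Instance.

Lemma ler_ratio_of_bounds (R : realFieldType) (a b d r eps : R) :
  0 < eps -> 0 < b -> 0 <= a -> a <= b * r -> b / (1 + eps) <= d ->
  a / d <= (1 + eps) * r.
Proof.
move=> eps_gt0 b_gt0 a_ge0 a_le b_le.
have d_gt0 : 0 < d by apply: lt_le_trans b_le; rewrite divr_gt0 //; lra.
have r_ge0 : 0 <= r by rewrite -(pmulr_rge0 _ b_gt0) (le_trans a_ge0).
rewrite ler_pdivrMr // (le_trans a_le) //.
have -> : b * r = (1 + eps) * r * (b / (1 + eps)) by field; lra.
by rewrite ler_wpM2l // mulr_ge0 //; lra.
Qed.

Lemma balanced_cover_le (R : realFieldType) (s A B M : nat) (x y u v us vs r : R) :
  (0 < M)%N -> 0 <= x -> 0 <= y -> 0 <= u -> 0 <= v -> 0 <= us -> 0 <= vs ->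
  x * us ^+ s.-1 = y * vs ^+ s ->
  s%:R * A%:R * (1 - us) + s.+1%:R * B%:R * (1 - vs) = (A + B)%:R ->
  A%:R * x * (1 - us ^+ s) + B%:R * y * (1 - vs ^+ s.+1) <= (A%:R * x + B%:R * y) * r ->
  (1 - u) * (s * M * A)%:R + (1 - v) * (s.+1 * M * B)%:R <= (M * (A + B))%:R ->
  A%:R * x * (1 - u ^+ s) + B%:R * y * (1 - v ^+ s.+1) <= (A%:R * x + B%:R * y) * r.
Proof.
move=> M_gt0 x_ge0 y_ge0 u_ge0 v_ge0 us_ge0 vs_ge0 lagrange balanced opt_le cover_budget.
have budget : s%:R * A%:R * us + s.+1%:R * B%:R * vs <= s%:R * A%:R * u + s.+1%:R * B%:R * v.
  rewrite -subr_ge0 -(pmulr_rge0 _ (ltr0Sn R M.-1)) prednK //.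
  have -> : M%:R * (s%:R * A%:R * u + s.+1%:R * B%:R * v -
      (s%:R * A%:R * us + s.+1%:R * B%:R * vs)) =
      (M * (A + B))%:R - ((1 - u) * (s * M * A)%:R + (1 - v) * (s.+1 * M * B)%:R).
    by rewrite !natrM -balanced; ring.
  by rewrite subr_ge0.
have := weighted_powers_min (m1 := s) (m2 := s.+1) (ler0n R A) (ler0n R B) x_ge0 y_ge0
  u_ge0 v_ge0 us_ge0 vs_ge0 lagrange budget.
by move: opt_le; lra.
Qed.

Definition gap_instance (R : realType) (c bound : R) : Prop :=
  exists (E : finType) (w : E -> R) (n : nat) (S : 'I_n -> {set E}) (k : nat),
    (forall e, 0 <= w e) /\
    k%:R = c * n%:R /\
    0 < lp_opt w S (c * n%:R) /\
    mc_opt w S k / lp_opt w S (c * n%:R) <= bound.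

Lemma balanced_gap_instance (R : realType) (s A B : nat) (x y us vs r eps : R) :
  (0 < s)%N -> (0 < A)%N -> 0 < x -> 0 <= y -> 0 <= us -> 0 <= vs -> 0 < eps ->
  x * us ^+ s.-1 = y * vs ^+ s ->
  s%:R * A%:R * (1 - us) + s.+1%:R * B%:R * (1 - vs) = (A + B)%:R ->
  A%:R * x * (1 - us ^+ s) + B%:R * y * (1 - vs ^+ s.+1) <= (A%:R * x + B%:R * y) * r ->
  gap_instance ((A + B)%:R / (s * A + s.+1 * B)%:R) ((1 + eps) * r).
Proof.
move=> s_gt0 A_gt0 x_gt0 y_ge0 us_ge0 vs_ge0 eps_gt0 lagrange balanced opt_le.
set c := _ / _.
have sR : 0 < s%:R :> R by rewrite ltr0n.
have AR : 0 < A%:R :> R by rewrite ltr0n.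
have BR : 0 <= B%:R :> R by rewrite ler0n.
have lam_gt0 : 0 < A%:R * x by rewrite mulr_gt0.
have mu_ge0 : 0 <= B%:R * y by rewrite mulr_ge0.
(* Beyond [K], the falling-factorial ratios of both blocks exceed [1/(1 + eps)]. *)
pose K : R := (s.+1 * s.+1)%:R * (1 + eps) / eps.
have K_ge0 : 0 <= K by rewrite divr_ge0 ?mulr_ge0 ?ler0n //; lra.
set M := Num.Def.archi_bound K; have K_lt_M : K < M%:R := archi_boundP K_ge0.
have M_gt0 : (0 < M)%N by rewrite -(ltr0n R) (le_lt_trans K_ge0).
have K_le t n : (0 < t * n)%N -> K <= (t * M * n)%:R.
  move=> tn_gt0; rewrite (le_trans (ltW K_lt_M)) // ler_nat mulnAC leq_pmull //.
pose h := (s * M * A)%N; pose l := (s.+1 * M * B)%N; pose k := (M * (A + B))%N.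
exists (inst_elem s h l), (@inst_weight R s h l (A%:R * x) (B%:R * y)), (h + l)%N,
  (@inst_set s h l), k.
have ck : c * (h + l)%:R = k%:R.
  have -> : (h + l = M * (s * A + s.+1 * B))%N by rewrite /h /l; ring.
  by rewrite /c /k !natrM; field; apply: lt0r_neq0; nra.
have lp_ge : (A%:R * x + B%:R * y) / (1 + eps) <=
    lp_opt (inst_weight (A%:R * x) (B%:R * y)) (@inst_set s h l) (c * (h + l)%:R).
  apply: le_trans (lp_opt_inst_ge s_gt0 (ltW lam_gt0) mu_ge0 _); last first.
    rewrite ck /h /l /k !natrM natrD le_eqVlt; apply/orP; left; apply/eqP; field.
    by rewrite !lt0r_neq0 //; lra.
  rewrite mulrDl; apply: lerD.
    apply: (ler_wpM2l (ltW lam_gt0)).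
    by apply: ffact_expn_ratio_ge eps_gt0 (leqnSn _) _; rewrite K_le // muln_gt0 s_gt0.
  have [B0|B_gt0] := posnP B; first by rewrite B0 !mul0r.
  apply: (ler_wpM2l mu_ge0).
  by apply: ffact_expn_ratio_ge eps_gt0 (leqnn _) _; rewrite K_le // muln_gt0 B_gt0.
split; first by case=> _ /=; rewrite divr_ge0 ?exprn_ge0 ?ler0n ?mu_ge0 ?(ltW lam_gt0).
split; first by rewrite ck.
split; first by apply: lt_le_trans lp_ge; rewrite divr_gt0 ?ltr_pwDl //; lra.
apply: ler_ratio_of_bounds (mc_opt_ge0 _ _ _) _ lp_ge; rewrite ?ltr_pwDl //.
apply: mc_opt_inst_le => u v u_ge0 v_ge0.
exact: balanced_cover_le (ltW x_gt0) y_ge0 u_ge0 v_ge0 us_ge0 vs_ge0 lagrange balanced opt_le.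
Qed.

Lemma ratio_decomposition (p q : nat) : (0 < p)%N -> (p <= q)%N ->
  exists s A B : nat, [/\ (0 < s)%N, (0 < A)%N, p = (A + B)%N & q = (s * A + s.+1 * B)%N].
Proof.
move=> p_gt0 p_le_q; set s := (q %/ p)%N.
have lo : (s * p <= q)%N := leq_divM q p.
have hi : (q < s.+1 * p)%N := ltn_ceil q p_gt0.
have pE : p = (s.+1 * p - q + (q - s * p))%N by rewrite mulSn in hi *; lia.
exists s, (s.+1 * p - q)%N, (q - s * p)%N; split => //.
- by rewrite divn_gt0.
- by rewrite subn_gt0.
- by rewrite mulSn addnCA -mulnDr -pE; lia.
Qed.

Lemma mc_s_ratio (R : realType) (s A B : nat) : (0 < A)%N ->
  mc_s ((A + B)%:R / (s * A + s.+1 * B)%:R : R) = s.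
Proof.
move=> A_gt0; have AB : 0 < (A + B)%:R :> R by rewrite ltr0n addn_gt0 A_gt0.
apply/eqP; rewrite /mc_s invf_div truncn_eq ?divr_ge0 ?ler0n //.
rewrite ler_pdivlMr // ltr_pdivrMr // -!natrM ler_nat ltr_nat.
by rewrite !mulnDr leq_add2l ltn_add2r leq_mul2r ltn_mul2r leqnSn ltnSn A_gt0 orbT.
Qed.

Lemma alpha_star_point (R : realType) (s : nat) (c : R) :
  0 < c -> c < s%:R^-1 -> mc_s c = s ->
  let a := alpha_star c in
  let us := 1 - a * c - (1 - a) / s%:R in let vs := 1 - a * c - (1 - a) / s.+1%:R in
  [/\ 0 <= us, 0 < vs & us ^+ s = vs ^+ s.+1].
Proof.
move=> c_gt0 c_lt c_s a us vs.
have s_gt0 : (0 < s)%N by rewrite lt0n; apply: contraTneq c_lt => ->; rewrite invr0 -leNgt ltW.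
have sR : 0 < s%:R :> R by rewrite ltr0n.
have c01 : 0 < c < 1 by rewrite c_gt0 (lt_le_trans c_lt) // invf_le1 // ler1n.
have [/andP[a_ge0 a_lt1] sigma_eq] := alpha_star_spec c01.
rewrite -/a c_s in a_ge0 a_lt1 sigma_eq; split.
- have t_le1 : s%:R^-1 <= 1 :> R by rewrite invf_le1 // ler1n.
  rewrite /us; move: c_lt t_le1; set t := s%:R^-1 => c_lt t_le1; nra.
- have t_lt1 : s.+1%:R^-1 < 1 :> R by rewrite invf_lt1 ?ltr0n // ltr1n.
  rewrite /vs; move: c_lt t_lt1; set t := s.+1%:R^-1 => c_lt t_lt1; nra.
- exact: sigma_eq.
Qed.

Lemma rho_gap_instance (R : realType) (s A B : nat) (eps : R) :
  (0 < s)%N -> (0 < A)%N -> 0 < eps ->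
  let c : R := (A + B)%:R / (s * A + s.+1 * B)%:R in
  gap_instance c ((1 + eps) * rho c).
Proof.
move=> s_gt0 A_gt0 eps_gt0 c.
have c_s : mc_s c = s by apply: mc_s_ratio.
have sR : 0 < s%:R :> R by rewrite ltr0n.
have qE : (s * A + s.+1 * B)%:R = s%:R * A%:R + s.+1%:R * B%:R :> R.
  by rewrite natrD !natrM.
have [B0|B_gt0] := posnP B.
  have c_eq : c = s%:R^-1 by rewrite /c qE B0 mulr0 addr0 addn0; field; rewrite !gt_eqF ?ltr0n.
  have -> : rho c = 1 - (1 - s%:R^-1) ^+ s by rewrite /rho c_s {1}c_eq eqxx c_eq.
  have us_ge0 : 0 <= 1 - s%:R^-1 :> R by rewrite subr_ge0 invf_le1 // ler1n.
  (* The second block is empty; [vs = 1] makes the Lagrange condition trivial. *)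
  apply: (balanced_gap_instance (x := 1) (y := (1 - s%:R^-1) ^+ s.-1) (us := 1 - s%:R^-1) (vs := 1)) => //.
  - by rewrite exprn_ge0.
  - by rewrite expr1n mul1r mulr1.
  - by rewrite B0 subrr mulr0 addr0 addn0 subKr; field; rewrite gt_eqF.
  - by rewrite B0 !mul0r mulr1 !addr0.
have c_gt0 : 0 < c by rewrite divr_gt0 ?ltr0n ?addn_gt0 ?muln_gt0 ?s_gt0 ?A_gt0.
have c_lt : c < s%:R^-1.
  rewrite /c ltr_pdivrMr ?ltr0n ?addn_gt0 ?muln_gt0 ?s_gt0 ?A_gt0 //.
  rewrite mulrC ltr_pdivlMr // -natrM ltr_nat mulnC mulnDr ltn_add2l.
  by rewrite ltn_mul2r B_gt0 ltnSn.
have [us_ge0 vs_gt0 sigma_eq] := alpha_star_point c_gt0 c_lt c_s.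
rewrite /rho c_s (lt_eqF c_lt) /mc_sigma.
set us := 1 - _ - _ / s%:R in us_ge0 sigma_eq *; set vs := 1 - _ - _ in vs_gt0 sigma_eq.
apply: (balanced_gap_instance (x := vs ^+ s) (y := us ^+ s.-1) (us := us) (vs := vs)) => //.
- exact: exprn_gt0.
- exact: exprn_ge0.
- exact: ltW.
- exact: mulrC.
- have AR : 0 < A%:R :> R by rewrite ltr0n.
  have BR : 0 < B%:R :> R by rewrite ltr0n.
  by rewrite /us /vs /c qE natrD; field; rewrite !lt0r_neq0 //; nra.
- by rewrite -sigma_eq -mulrDl.
Qed.

Theorem theorem4p2 (R : realType) (p q : nat) (eps : R) :
  (0 < p <= q)%N -> 0 < eps ->
  let c : R := p%:R / q%:R in
  exists (E : finType) (w : E -> R) (n : nat) (S : 'I_n -> {set E}) (k : nat),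
    (forall e, 0 <= w e) /\
    k%:R = c * n%:R /\
    0 < lp_opt w S (c * n%:R) /\
    mc_opt w S k / lp_opt w S (c * n%:R) <= (1 + eps) * rho c.
Proof.
move=> /andP[p_gt0 p_le_q] eps_gt0.
have [s [A [B [s_gt0 A_gt0 -> ->]]]] := ratio_decomposition p_gt0 p_le_q.
exact: rho_gap_instance.
Qed.
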